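(* Let $n\ge 1$, let $a_1<\dots<a_n$ be keys stored in a sorted array, let $p=(p_1,\dots,p_n)$ be the true probability distribution over keys, and let $\hat p=(\hat p_1,\dots,\hat p_n)$ be any predicted probability distribution over $[n]$. Let $\eta$ be the earth mover's distance between $p$ and $\hat p$. When the target key is $a=a_i$ with probability $p_i$, the algorithm $\mathcal{A}$ described in the context (given $\hat p$) finds the target, and its expected number of comparisons $\sum_{i=1}^n p_i C(a_i)$ satisfies $$\sum_{i=1}^n p_i C(a_i)\;\le\; 4H(p)+8\max(\log\eta+2,\,1)+8 \;=\; O\big(H(p)+\max(\log \eta,0)\big).$$
   Context: All logarithms are base 2. $H(p)=-\sum_{i=1}^n p_i\log p_i$ is the entropy of $p$ (with $0\log 0=0$). The earth mover's distance between distributions $P,Q$ on $[n]$ is $\inf_{\gamma\in\Pi(P,Q)}\mathbb{E}_{(x,y)\sim\gamma}|x-y|$, where $\Pi(P,Q)$ is the set of couplings of $P$ and $Q$ (joint distributions on $[n]\times[n]$ with marginals $P$ and $Q$). A comparison of the target $a$ with a key $a_j$ returns whether $a<a_j$, $a=a_j$ or $a>a_j$, and counts as one query; $C(a_i)$ denotes the number of comparisons made by the algorithm when the target is $a_i$. Algorithm $\mathcal{A}$ (input: $\hat p$ and target $a\in\{a_1,\dots,a_n\}$): maintain a search range $[\ell,r]$ of indices, initially $\ell=1,r=n$, always containing the index of $a$. Run iterations $i=0,1,2,\dots$, each with two phases: (1) Bisection: repeat the following step $2^i$ times (stopping if $a$ is found). With $S=\sum_{j=\ell}^r\hat p_j$,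 pick an index $k\in[\ell,r]$ with $\sum_{j=\ell}^{k-1}\hat p_j\le S/2$ and $\sum_{j=k+1}^{r}\hat p_j\le S/2$; compare $a$ with $a_k$; if equal, return $k$; otherwise replace the range by $[\ell,k-1]$ or $[k+1,r]$ according to the comparison. (2) Binary search at the endpoints: with the current range $[\ell,r]$, set $d=\min(2^{2^i},r-\ell)$; compare $a$ with $a_{\ell+d}$ and $a_{r-d}$ to determine whether $a$ lies in $[a_\ell,a_{\ell+d}]$ or $[a_{r-d},a_r]$. If so, run standard binary search (always querying the middle of the current range) on that index range until $a$ is found. Otherwise start iteration $i+1$ with range $[\ell+d+1,r-d-1]$. *)

From Stdlib Require Import Reals Lra Lia Arith List.
Open Scope R_scope.

Definition log2 (x : R) : R := ln x / ln 2.

(* sum_{j=l}^{r} f j  (empty, i.e. 0, when r < l) *)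
Definition sumR (l r : nat) (f : nat -> R) : R :=
  fold_right (fun j acc => f j + acc) 0 (seq l (S r - l)).

Definition plogp (x : R) : R := if Req_EM_T x 0 then 0 else x * log2 x.
Definition entropy (n : nat) (p : nat -> R) : R := - sumR 1 n (fun i => plogp (p i)).

Definition is_distr (n : nat) (p : nat -> R) : Prop :=
  (forall i, (1 <= i <= n)%nat -> 0 <= p i) /\ sumR 1 n p = 1.

Definition is_coupling (n : nat) (P Q : nat -> R) (g : nat -> nat -> R) : Prop :=
  (forall x y, (1 <= x <= n)%nat -> (1 <= y <= n)%nat -> 0 <= g x y) /\
  (forall x, (1 <= x <= n)%nat -> sumR 1 n (fun y => g x y) = P x) /\
  (forall y, (1 <= y <= n)%nat -> sumR 1 n (fun x => g x y) = Q y).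

Definition coupling_cost (n : nat) (g : nat -> nat -> R) : R :=
  sumR 1 n (fun x => sumR 1 n (fun y => g x y * Rabs (INR x - INR y))).

Definition is_emd (n : nat) (P Q : nat -> R) (eta : R) : Prop :=
  (forall g, is_coupling n P Q g -> eta <= coupling_cost n g) /\
  (forall b, (forall g, is_coupling n P Q g -> b <= coupling_cost n g) -> b <= eta).

Definition cmpR (x y : R) : comparison :=
  match total_order_T x y with
  | inleft (left _) => Lt
  | inleft (right _) => Eq
  | inright _ => Gt
  end.

Definition valid_median (n : nat) (phat : nat -> R) (med : nat -> nat -> nat) : Prop :=
  forall l r, (1 <= l <= r)%nat -> (r <= n)%nat ->
    let k := med l r in
    let Sm := sumR l r phat in
    (l <= k <= r)%nat /\
    sumR l (k - 1) phat <= Sm / 2 /\ sumR (S k) r phat <= Sm / 2.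

Definition add_cnt (c : nat) (o : option (nat * nat)) : option (nat * nat) :=
  match o with Some (x, c') => Some (x, (c + c')%nat) | None => None end.

(* Standard binary search on the index range [l,r] (query the middle),
   with fuel; returns (found index, number of comparisons). *)
Fixpoint bsearch (a : nat -> R) (fuel l r : nat) (x : R) : option (nat * nat) :=
  match fuel with
  | O => None
  | S f =>
    let m := ((l + r) / 2)%nat in
    match cmpR x (a m) with
    | Eq => Some (m, 1%nat)
    | Lt => add_cnt 1 (bsearch a f l (m - 1) x)
    | Gt => add_cnt 1 (bsearch a f (S m) r x)
    end
  end.

Inductive bres := BFound (k c : nat) | BRange (l r c : nat).

Definition add_bres (c : nat) (b : bres) : bres :=
  match b with
  | BFound k c' => BFound k (c + c')
  | BRange l r c' => BRange l r (c + c')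
  end.

Fixpoint bisect (a : nat -> R) (med : nat -> nat -> nat) (k l r : nat) (x : R) : bres :=
  match k with
  | O => BRange l r 0
  | S k' =>
    let m := med l r in
    match cmpR x (a m) with
    | Eq => BFound m 1
    | Lt => add_bres 1 (bisect a med k' l (m - 1) x)
    | Gt => add_bres 1 (bisect a med k' (S m) r x)
    end
  end.

(* Algorithm A, iterations i, i+1, ... from range [l,r], with fuel.
   Returns Some (index found, total number of comparisons). *)
Fixpoint algA (a : nat -> R) (med : nat -> nat -> nat) (fuel i l r : nat) (x : R)
  : option (nat * nat) :=
  match fuel with
  | O => None
  | S f =>
    match bisect a med (2 ^ i) l r x with
    | BFound k c => Some (k, c)
    | BRange l' r' c =>
      let d := Nat.min (2 ^ (2 ^ i)) (r' - l') in
      let c' := (c + 2)%nat in   (* the two endpoint comparisons *)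
      let c1 := cmpR x (a (l' + d)%nat) in
      let c2 := cmpR x (a (r' - d)%nat) in
      match c1, c2 with
      | Eq, _ => Some ((l' + d)%nat, c')
      | _, Eq => Some ((r' - d)%nat, c')
      | Lt, _ => add_cnt c' (bsearch a f l' (l' + d) x)
      | _, Gt => add_cnt c' (bsearch a f (r' - d) r' x)
      | _, _ => add_cnt c' (algA a med f (S i) (S (l' + d)) (r' - d - 1) x)
      end
    end
  end.

(* the bound's term max(log eta + 2, 1), with log 0 = -infinity *)
Definition log_term (eta : R) : R :=
  if Rlt_dec 0 eta then Rmax (log2 eta + 2) 1 else 1.

(** Fix a coupling g of p and p̂ whose cost c is below η + 1/4, and let c_i be the
    cost of transporting the mass of key i under g.  The bisection phases of
    iterations 0..K halve the predicted mass of the range 2^(K+1) - 1 times; once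
    this leaves less mass than the window of radius 2^(2^K) around the target
    carries, the range cannot contain the window, so an endpoint probe of iteration
    K locates the target and it is found within 4·2^K + 2 comparisons.  If that
    fails at the previous level, then either half of p_i is transported out of the
    window, which costs c_i ≥ p_i 2^(2^(K-1)) / 2, or the window holds p_i/2 of
    predicted mass, which is at most 2^(1-2^K); in both cases
    2^(2^K) ≤ Z_i / p_i with Z_i = 4 max(1, c_i²/p_i).  So C(a_i) ≤ 4 log(Z_i/p_i) + 2,
    and by Jensen Σ p_i C(a_i) ≤ 4 H(p) + 4 log Σ p_i Z_i + 2 ≤ 4 H(p) + 4 log(4 + 4c²) + 2. *)

From Stdlib Require Import Reals Lra Lia List Classical Wf_nat.
Open Scope R_scope.

Definition lsum (s : list nat) (f : nat -> R) : R :=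
  fold_right (fun j acc => f j + acc) 0 s.

Lemma lsum_app s t f : lsum (s ++ t) f = lsum s f + lsum t f.
Proof. induction s as [|j s IH]; simpl; [|rewrite IH]; ring. Qed.

Lemma lsum_le s f g : (forall j, In j s -> f j <= g j) -> lsum s f <= lsum s g.
Proof.
  induction s as [|j s IH]; intros H; simpl; [lra|].
  assert (f j <= g j) by (apply H; left; reflexivity).
  assert (lsum s f <= lsum s g) by (apply IH; intros k Hk; apply H; right; exact Hk).
  lra.
Qed.

Lemma lsum_add s f g : lsum s (fun j => f j + g j) = lsum s f + lsum s g.
Proof. induction s as [|j s IH]; simpl; [|rewrite IH]; ring. Qed.

Lemma lsum_scal s c f : lsum s (fun j => c * f j) = c * lsum s f.
Proof. induction s as [|j s IH]; simpl; [|rewrite IH]; ring. Qed.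

Lemma lsum_nonneg s f : (forall j, In j s -> 0 <= f j) -> 0 <= lsum s f.
Proof.
  induction s as [|j s IH]; intros H; simpl; [lra|].
  assert (0 <= f j) by (apply H; left; reflexivity).
  assert (0 <= lsum s f) by (apply IH; intros k Hk; apply H; right; exact Hk).
  lra.
Qed.

Lemma lsum_single s f j : (forall k, In k s -> 0 <= f k) -> In j s -> f j <= lsum s f.
Proof.
  induction s as [|k s IH]; intros H Hj; [destruct Hj|simpl].
  assert (0 <= f k) by (apply H; left; reflexivity).
  assert (0 <= lsum s f) by (apply lsum_nonneg; intros m Hm; apply H; right; exact Hm).
  destruct Hj as [<-|Hj]; [lra|].
  assert (f j <= lsum s f) by (apply IH; [intros m Hm; apply H; right|]; assumption).
  lra.
Qed.

Lemma sumR_lsum l r f : sumR l r f = lsum (seq l (S r - l)) f.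
Proof. reflexivity. Qed.

Lemma in_range l r j : In j (seq l (S r - l)) <-> (l <= j <= r)%nat.
Proof. rewrite in_seq. lia. Qed.

Lemma sumR_le l r f g : (forall j, (l <= j <= r)%nat -> f j <= g j) ->
  sumR l r f <= sumR l r g.
Proof. intros H. apply lsum_le. intros j Hj. apply H, in_range, Hj. Qed.

Lemma sumR_add l r f g : sumR l r (fun j => f j + g j) = sumR l r f + sumR l r g.
Proof. apply lsum_add. Qed.

Lemma sumR_scal l r c f : sumR l r (fun j => c * f j) = c * sumR l r f.
Proof. apply lsum_scal. Qed.

Lemma sumR_nonneg l r f : (forall j, (l <= j <= r)%nat -> 0 <= f j) -> 0 <= sumR l r f.
Proof. intros H. apply lsum_nonneg. intros j Hj. apply H, in_range, Hj. Qed.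

Lemma sumR_single l r f j : (forall k, (l <= k <= r)%nat -> 0 <= f k) ->
  (l <= j <= r)%nat -> f j <= sumR l r f.
Proof.
  intros H Hj. apply lsum_single; [intros k Hk; apply H, in_range, Hk|apply in_range, Hj].
Qed.

Lemma sumR_split l m r f : (l <= S m)%nat -> (m <= r)%nat ->
  sumR l r f = sumR l m f + sumR (S m) r f.
Proof.
  intros Hl Hr. rewrite !sumR_lsum.
  replace (S r - l)%nat with (S m - l + (S r - S m))%nat by lia.
  rewrite seq_app, lsum_app. replace (l + (S m - l))%nat with (S m) by lia. reflexivity.
Qed.

Lemma sumR_split3 l lo hi r f : (1 <= l <= lo)%nat -> (lo <= S hi)%nat -> (hi <= r)%nat ->
  sumR l r f = sumR l (lo - 1) f + sumR lo hi f + sumR (S hi) r f.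
Proof.
  intros Hl Hlo Hhi.
  rewrite (sumR_split l (lo - 1) r) by lia. replace (S (lo - 1)) with lo by lia.
  rewrite (sumR_split lo hi r) by lia. ring.
Qed.

Lemma sumR_subrange l lo hi r f : (forall j, (l <= j <= r)%nat -> 0 <= f j) ->
  (1 <= l <= lo)%nat -> (lo <= S hi)%nat -> (hi <= r)%nat -> sumR lo hi f <= sumR l r f.
Proof.
  intros H Hl Hlo Hhi. rewrite (sumR_split3 l lo hi r) by lia.
  assert (0 <= sumR l (lo - 1) f) by (apply sumR_nonneg; intros; apply H; lia).
  assert (0 <= sumR (S hi) r f) by (apply sumR_nonneg; intros; apply H; lia).
  lra.
Qed.

Definition sorted_keys (n : nat) (a : nat -> R) : Prop :=
  forall i j, (1 <= i)%nat -> (i < j)%nat -> (j <= n)%nat -> a i < a j.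

Lemma cmpR_keys n a i m : sorted_keys n a -> (1 <= i <= n)%nat -> (1 <= m <= n)%nat ->
  cmpR (a i) (a m) = Nat.compare i m.
Proof.
  intros Ha Hi Hm. unfold cmpR.
  destruct (Nat.compare_spec i m) as [<-|Hlt|Hgt].
  - destruct (total_order_T (a i) (a i)) as [[H|H]|H]; [lra|reflexivity|lra].
  - assert (a i < a m) by (apply Ha; lia).
    destruct (total_order_T (a i) (a m)) as [[H'|H']|H']; [reflexivity|lra|lra].
  - assert (a m < a i) by (apply Ha; lia).
    destruct (total_order_T (a i) (a m)) as [[H'|H']|H']; [lra|lra|reflexivity].
Qed.

Lemma bsearch_finds n a i : sorted_keys n a -> (1 <= i <= n)%nat ->
  forall fuel b l r, (1 <= l)%nat -> (l <= i <= r)%nat -> (r <= n)%nat ->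
  (r + 1 - l <= fuel)%nat -> (r + 2 - l <= 2 ^ b)%nat ->
  exists c, bsearch a fuel l r (a i) = Some (i, c) /\ (c <= b)%nat.
Proof.
  intros Ha Hi fuel. induction fuel as [|f IH]; intros b l r Hl Hlir Hr Hfuel Hb; [lia|].
  destruct b as [|b]; [simpl in Hb; lia|].
  rewrite Nat.pow_succ_r' in Hb. cbn [bsearch].
  assert (Hm : (2 * ((l + r) / 2) <= l + r <= 2 * ((l + r) / 2) + 1)%nat).
  { pose proof (Nat.div_mod_eq (l + r) 2). pose proof (Nat.mod_upper_bound (l + r) 2). lia. }
  set (m := ((l + r) / 2)%nat) in *. clearbody m.
  rewrite (cmpR_keys n a i m Ha Hi) by lia.
  destruct (Nat.compare_spec i m) as [<-|Hlt|Hgt].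
  - exists 1%nat. split; [reflexivity|lia].
  - destruct (IH b l (m - 1)%nat) as [c [E Hc]]; try lia.
    rewrite E. exists (1 + c)%nat. split; [reflexivity|lia].
  - destruct (IH b (S m) r) as [c [E Hc]]; try lia.
    rewrite E. exists (1 + c)%nat. split; [reflexivity|lia].
Qed.

Lemma bisect_correct n a med phat i : sorted_keys n a -> (1 <= i <= n)%nat ->
  valid_median n phat med ->
  forall k l r, (1 <= l)%nat -> (l <= i <= r)%nat -> (r <= n)%nat ->
  (exists c, bisect a med k l r (a i) = BFound i c /\ (c <= k)%nat) \/
  (exists l' r', bisect a med k l r (a i) = BRange l' r' k /\
     (l <= l' <= i)%nat /\ (i <= r' <= r)%nat /\ 2 ^ k * sumR l' r' phat <= sumR l r phat).
Proof.
  intros Ha Hi Hmed k. induction k as [|k IH]; intros l r Hl Hlir Hr.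
  { right. exists l, r. repeat split; try lia. simpl. lra. }
  cbn [bisect].
  destruct (Hmed l r ltac:(lia) Hr) as [Hm [Hleft Hright]]. cbv zeta in Hm, Hleft, Hright.
  set (m := med l r) in *. clearbody m.
  assert (H2k : 2 ^ S k = 2 * 2 ^ k) by reflexivity.
  rewrite (cmpR_keys n a i m Ha Hi) by lia.
  destruct (Nat.compare_spec i m) as [<-|Hlt|Hgt].
  - left. exists 1%nat. split; [reflexivity|lia].
  - destruct (IH l (m - 1)%nat) as [[c [E Hc]]|[l' [r' [E [H1 [H2 H3]]]]]]; try lia.
    + left. rewrite E. exists (1 + c)%nat. split; [reflexivity|simpl; lia].
    + right. rewrite E. exists l', r'. repeat split; try lia. nra.
  - destruct (IH (S m) r) as [[c [E Hc]]|[l' [r' [E [H1 [H2 H3]]]]]]; try lia.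
    + left. rewrite E. exists (1 + c)%nat. split; [reflexivity|simpl; lia].
    + right. rewrite E. exists l', r'. repeat split; try lia. nra.
Qed.

Lemma endpoint_phase n a med i f i0 l r l' r' c :
  sorted_keys n a -> (1 <= i <= n)%nat ->
  bisect a med (2 ^ i0) l r (a i) = BRange l' r' c ->
  (1 <= l' <= i)%nat -> (i <= r' <= n)%nat -> (r' - l' + 1 <= f)%nat ->
  let D := (2 ^ 2 ^ i0)%nat in
  (exists c', algA a med (S f) i0 l r (a i) = Some (i, c') /\ (c' <= c + 2 ^ i0 + 3)%nat) \/
  ((l' + D < i < r' - D)%nat /\
   algA a med (S f) i0 l r (a i) =
     add_cnt (c + 2) (algA a med f (S i0) (S (l' + D)) (r' - D - 1) (a i))).
Proof.
  intros Ha Hi E Hl' Hr' Hf D. cbn [algA]. rewrite E.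
  assert (HD : (2 <= D)%nat).
  { unfold D. pose proof (Nat.pow_gt_lin_r 2 i0). rewrite <- (Nat.pow_1_r 2) at 1.
    apply Nat.pow_le_mono_r; lia. }
  set (d := Nat.min (2 ^ 2 ^ i0) (r' - l')). fold D in d.
  assert (Hd : (d <= D /\ d <= r' - l' /\ (d = D \/ d = r' - l'))%nat) by lia.
  clearbody d.
  assert (Hsearch : forall lb rb, (l' <= lb)%nat -> (lb <= i <= rb)%nat -> (rb <= r')%nat ->
      (rb - lb <= d)%nat -> exists c',
      add_cnt (c + 2) (bsearch a f lb rb (a i)) = Some (i, c') /\ (c' <= c + 2 ^ i0 + 3)%nat).
  { intros lb rb H1 H2 H3 H4.
    destruct (bsearch_finds n a i Ha Hi f (2 ^ i0 + 1) lb rb) as [c' [Ec' Hc']]; try lia.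
    { rewrite Nat.pow_add_r, Nat.pow_1_r. fold D. lia. }
    rewrite Ec'. exists (c + 2 + c')%nat. split; [reflexivity|lia]. }
  rewrite (cmpR_keys n a i (l' + d) Ha Hi) by lia.
  rewrite (cmpR_keys n a i (r' - d) Ha Hi) by lia.
  destruct (Nat.compare_spec i (l' + d)) as [Q|Q|Q];
    destruct (Nat.compare_spec i (r' - d)) as [Q'|Q'|Q'];
    try (left; eexists; split; [rewrite <- ?Q, <- ?Q'; reflexivity|lia]);
    try (left; apply Hsearch; lia).
  right. replace d with D in * by lia. split; [lia|reflexivity].
Qed.

Definition window_mass (n : nat) (q : nat -> R) (i D : nat) : R :=
  sumR (Nat.max 1 (i - D)) (Nat.min n (i + D)) q.

(* 2 ^ (2 ^ S K - 2 ^ i0) is the shrinkage still to come from the bisection phases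
   of iterations i0..K. *)
Lemma algA_finds n a med phat i : sorted_keys n a -> (1 <= i <= n)%nat ->
  valid_median n phat med -> (forall j, (1 <= j <= n)%nat -> 0 <= phat j) ->
  forall K fuel i0 l r, (i0 <= K)%nat -> (1 <= l)%nat -> (l <= i <= r)%nat -> (r <= n)%nat ->
  (r - l + 2 <= fuel)%nat ->
  sumR l r phat < 2 ^ (2 ^ S K - 2 ^ i0) * window_mass n phat i (2 ^ 2 ^ K) ->
  exists c, algA a med fuel i0 l r (a i) = Some (i, c) /\
    (c + 2 ^ i0 <= 2 ^ S K + 2 * (K - i0) + 2 ^ K + 3)%nat.
Proof.
  intros Ha Hi Hmed Hphat K fuel.
  induction fuel as [|f IH]; intros i0 l r HK Hl Hlir Hr Hfuel Hmass; [lia|].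
  assert (Hpow : (2 ^ i0 <= 2 ^ K)%nat) by (apply Nat.pow_le_mono_r; lia).
  rewrite Nat.pow_succ_r' in *.
  destruct (bisect_correct n a med phat i Ha Hi Hmed (2 ^ i0) l r Hl Hlir Hr)
    as [[c [E Hc]]|[l' [r' [E [Hl' [Hr' Hhalf]]]]]].
  { exists c. cbn [algA]. rewrite E. split; [reflexivity|lia]. }
  destruct (endpoint_phase n a med i f i0 l r l' r' (2 ^ i0) Ha Hi E)
    as [[c [Ec Hc]]|[Hinside Ealg]]; try lia.
  { exists c. split; [exact Ec|lia]. }
  set (D := (2 ^ 2 ^ i0)%nat) in *.
  assert (Hwin : window_mass n phat i D <= sumR l' r' phat).
  { apply sumR_subrange; try lia. intros j Hj. apply Hphat. lia. }
  assert (HD : 0 < 2 ^ 2 ^ i0) by (apply pow_lt; lra).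
  destruct (Nat.eq_dec K i0) as [<-|HKi0].
  { exfalso. replace (2 * 2 ^ K - 2 ^ K)%nat with (2 ^ K)%nat in Hmass by lia.
    fold D in Hmass. nra. }
  destruct (IH (S i0) (S (l' + D)) (r' - D - 1)%nat) as [c [Ec Hc]]; try lia.
  - assert (Hsub : sumR (S (l' + D)) (r' - D - 1) phat <= sumR l' r' phat).
    { apply sumR_subrange; try lia. intros j Hj. apply Hphat. lia. }
    assert (Hpow' : (2 ^ S i0 <= 2 ^ K)%nat) by (apply Nat.pow_le_mono_r; lia).
    rewrite Nat.pow_succ_r' in Hpow' |- *.
    replace (2 * 2 ^ K - 2 ^ i0)%nat with (2 ^ i0 + (2 * 2 ^ K - 2 * 2 ^ i0))%nat
      in Hmass by lia.
    rewrite pow_add in Hmass.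
    apply (Rmult_lt_reg_l (2 ^ 2 ^ i0)); [exact HD|]. nra.
  - rewrite Ealg, Ec. exists (2 ^ i0 + 2 + c)%nat. split; [reflexivity|].
    rewrite Nat.pow_succ_r' in Hc. lia.
Qed.

(* The predicted mass left by the 2 ^ S K - 1 bisection steps of iterations 0..K
   is below the mass of the window of radius 2 ^ 2 ^ K around key i. *)
Definition terminates_by (n : nat) (phat : nat -> R) (i K : nat) : Prop :=
  1 < 2 ^ (2 ^ S K - 1) * window_mass n phat i (2 ^ 2 ^ K).

Lemma two_mul_le_pow2 K : (2 * K <= 2 ^ K)%nat.
Proof.
  destruct K as [|K]; [simpl; lia|].
  pose proof (Nat.pow_gt_lin_r 2 K). rewrite Nat.pow_succ_r'. lia.
Qed.

Lemma algA_cost_by_level n a med phat i K : sorted_keys n a -> (1 <= i <= n)%nat ->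
  valid_median n phat med -> is_distr n phat -> terminates_by n phat i K ->
  exists c, algA a med (n + 2) 0 1 n (a i) = Some (i, c) /\ (c <= 4 * 2 ^ K + 2)%nat.
Proof.
  intros Ha Hi Hmed [Hphat Hsum] HK.
  destruct (algA_finds n a med phat i Ha Hi Hmed Hphat K (n + 2) 0 1 n) as [c [E Hc]];
    try lia.
  { rewrite Hsum. exact HK. }
  exists c. split; [exact E|].
  pose proof (two_mul_le_pow2 K). rewrite Nat.pow_succ_r' in Hc. simpl in Hc. lia.
Qed.

Lemma terminates_by_last n phat i : (1 <= i <= n)%nat -> sumR 1 n phat = 1 ->
  terminates_by n phat i n.
Proof.
  intros Hi Hsum. unfold terminates_by, window_mass.
  assert (Hn : (n < 2 ^ 2 ^ n)%nat).
  { pose proof (Nat.pow_gt_lin_r 2 n). pose proof (Nat.pow_gt_lin_r 2 (2 ^ n)). lia. }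
  replace (Nat.max 1 (i - 2 ^ 2 ^ n)) with 1%nat by lia.
  replace (Nat.min n (i + 2 ^ 2 ^ n)) with n by lia.
  rewrite Hsum, Rmult_1_r.
  assert (He : (1 <= 2 ^ S n - 1)%nat).
  { pose proof (Nat.pow_gt_lin_r 2 (S n)). lia. }
  destruct (2 ^ S n - 1)%nat as [|m]; [lia|].
  simpl. pose proof (pow_R1_Rle 2 m ltac:(lra)). lra.
Qed.

Lemma near_optimal_coupling n p phat eta : is_emd n p phat eta ->
  exists g, is_coupling n p phat g /\ coupling_cost n g < eta + 1/4.
Proof.
  intros [_ Hinf]. apply NNPP. intros Hnone.
  assert (eta + 1/4 <= eta); [|lra].
  apply Hinf. intros g Hg. apply Rnot_lt_le. intros Hlt. apply Hnone. exists g. auto.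
Qed.

Definition key_transport (n : nat) (g : nat -> nat -> R) (i : nat) : R :=
  sumR 1 n (fun y => g i y * Rabs (INR i - INR y)).

Lemma key_transport_nonneg n p phat g i : is_coupling n p phat g -> (1 <= i <= n)%nat ->
  0 <= key_transport n g i.
Proof.
  intros [Hg _] Hi. apply sumR_nonneg. intros y Hy.
  apply Rmult_le_pos; [apply Hg; auto|apply Rabs_pos].
Qed.

Lemma INR_le_dist i j D : ((j + D < i) \/ (i + D < j))%nat -> INR D <= Rabs (INR i - INR j).
Proof.
  pose proof (pos_INR D) as HD.
  intros [H|H]; apply lt_INR in H; rewrite plus_INR in H.
  - rewrite Rabs_right; lra.
  - rewrite Rabs_left; lra.
Qed.

Lemma coupling_window n p phat g i D : is_coupling n p phat g -> (1 <= i <= n)%nat ->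
  exists out, 0 <= out /\ p i <= window_mass n phat i D + out /\
    INR D * out <= key_transport n g i.
Proof.
  intros Hc Hi. pose proof Hc as [Hg [Hrow Hcol]].
  unfold window_mass. set (lo := Nat.max 1 (i - D)). set (hi := Nat.min n (i + D)).
  assert (Hlo : (1 <= lo <= i /\ (lo = 1 \/ lo = i - D))%nat) by (unfold lo; lia).
  assert (Hhi : (i <= hi <= n /\ (hi = n \/ hi = i + D))%nat) by (unfold hi; lia).
  clearbody lo hi.
  assert (Hgij : forall j, (1 <= j <= n)%nat -> 0 <= g i j) by (intros; apply Hg; auto).
  exists (sumR 1 (lo - 1) (g i) + sumR (S hi) n (g i)).
  split; [|split].
  - assert (0 <= sumR 1 (lo - 1) (g i)) by (apply sumR_nonneg; intros; apply Hgij; lia).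
    assert (0 <= sumR (S hi) n (g i)) by (apply sumR_nonneg; intros; apply Hgij; lia).
    lra.
  - rewrite <- (Hrow i Hi). change (fun y => g i y) with (g i).
    rewrite (sumR_split3 1 lo hi n) by lia.
    assert (sumR lo hi (g i) <= sumR lo hi phat); [|lra].
    apply sumR_le. intros j Hj. rewrite <- (Hcol j ltac:(lia)).
    apply (sumR_single 1 n (fun x => g x j)); [intros; apply Hg|]; lia.
  - unfold key_transport. rewrite (sumR_split3 1 lo hi n) by lia.
    set (cost := fun y => g i y * Rabs (INR i - INR y)).
    assert (Hfar : forall j, (1 <= j <= n)%nat -> ((j + D < i) \/ (i + D < j))%nat ->
                     INR D * g i j <= cost j).
    { intros j Hj Hfar. unfold cost. rewrite (Rmult_comm (INR D)).
      apply Rmult_le_compat_l; [apply Hgij; exact Hj|apply INR_le_dist; exact Hfar]. }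
    assert (INR D * sumR 1 (lo - 1) (g i) <= sumR 1 (lo - 1) cost).
    { rewrite <- sumR_scal. apply sumR_le. intros j Hj. apply Hfar; lia. }
    assert (INR D * sumR (S hi) n (g i) <= sumR (S hi) n cost).
    { rewrite <- sumR_scal. apply sumR_le. intros j Hj. apply Hfar; lia. }
    assert (0 <= sumR lo hi cost).
    { apply sumR_nonneg. intros j Hj. unfold cost.
      apply Rmult_le_pos; [apply Hgij; lia|apply Rabs_pos]. }
    lra.
Qed.

Lemma ln2_pos : 0 < ln 2.
Proof. pose proof ln_lt_2. lra. Qed.

Lemma log2_le x y : 0 < x -> x <= y -> log2 x <= log2 y.
Proof.
  intros Hx [Hlt|<-]; [|lra]. unfold log2, Rdiv.
  apply Rmult_le_compat_r; [left; apply Rinv_0_lt_compat, ln2_pos|].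
  left. apply ln_increasing; assumption.
Qed.

Lemma log2_mult x y : 0 < x -> 0 < y -> log2 (x * y) = log2 x + log2 y.
Proof. intros Hx Hy. unfold log2. rewrite ln_mult by assumption. field. apply Rgt_not_eq, ln2_pos. Qed.

Lemma log2_div x y : 0 < x -> 0 < y -> log2 (x / y) = log2 x - log2 y.
Proof.
  intros Hx Hy. unfold Rdiv at 1. rewrite log2_mult by (auto using Rinv_0_lt_compat).
  unfold log2. rewrite ln_Rinv by assumption. field. apply Rgt_not_eq, ln2_pos.
Qed.

Lemma log2_pow2 k : log2 (2 ^ k) = INR k.
Proof. unfold log2. rewrite ln_pow by lra. field. apply Rgt_not_eq, ln2_pos. Qed.

Lemma window_or_transport q W out D c : 0 < q -> 0 <= out -> q <= W + out ->
  D * out <= c -> 0 < D -> D * D * W <= 2 -> q * (D * D) <= 4 * Rmax 1 (c * c / q).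
Proof.
  intros Hq Hout Hsplit Hc HD HW.
  pose proof (Rmax_l 1 (c * c / q)). pose proof (Rmax_r 1 (c * c / q)).
  destruct (Rle_lt_dec out (q / 2)) as [Hnear|Hfar].
  - nra.
  - assert (Hcq : 4 * (c * c / q) = (2 * c) * (2 * c) / q) by (field; lra).
    assert (q * D < 2 * c) by nra.
    assert (0 < q * D) by nra.
    assert (q * (D * D) * q < (2 * c) * (2 * c)).
    { replace (q * (D * D) * q) with ((q * D) * (q * D)) by ring.
      apply Rmult_le_0_lt_compat; lra. }
    assert (q * (D * D) < (2 * c) * (2 * c) / q).
    { apply (Rmult_lt_reg_r q); [exact Hq|].
      replace ((2 * c) * (2 * c) / q * q) with ((2 * c) * (2 * c)) by (field; lra). lra. }
    lra.
Qed.

(* Z_i of the proof idea.  For p i = 0 division by zero makes it 4; it only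
   matters multiplied by p i. *)
Definition key_weight (n : nat) (p : nat -> R) (g : nat -> nat -> R) (i : nat) : R :=
  4 * Rmax 1 (key_transport n g i * key_transport n g i / p i).

Lemma key_weight_ge4 n p g i : 4 <= key_weight n p g i.
Proof. unfold key_weight. pose proof (Rmax_l 1 (key_transport n g i * key_transport n g i / p i)). lra. Qed.

Lemma first_level_weight n p phat g i K : is_coupling n p phat g -> (1 <= i <= n)%nat ->
  0 < p i -> p i <= 1 -> (K = 0%nat \/ ~ terminates_by n phat i (pred K)) ->
  p i * 2 ^ 2 ^ K <= key_weight n p g i.
Proof.
  intros Hc Hi Hp Hp1 Hfirst. pose proof (key_weight_ge4 n p g i).
  destruct K as [|K]; [simpl; lra|].
  destruct Hfirst as [Hfirst|Hfirst]; [discriminate|].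
  unfold terminates_by in Hfirst. apply Rnot_lt_le in Hfirst. simpl pred in Hfirst.
  destruct (coupling_window n p phat g i (2 ^ 2 ^ K) Hc Hi) as [out [Hout [Hsplit Hcost]]].
  assert (HD : INR (2 ^ 2 ^ K) = 2 ^ 2 ^ K) by (rewrite pow_INR; reflexivity).
  assert (HDD : 2 ^ 2 ^ S K = 2 ^ 2 ^ K * 2 ^ 2 ^ K)
    by (rewrite <- pow_add, Nat.pow_succ_r'; f_equal; lia).
  assert (Hhalf : 2 ^ 2 ^ S K = 2 * 2 ^ (2 ^ S K - 1)).
  { pose proof (Nat.pow_gt_lin_r 2 (S K)).
    replace (2 ^ S K)%nat with (S (2 ^ S K - 1)) at 1 by lia. reflexivity. }
  rewrite HD in Hcost. rewrite HDD.
  apply (window_or_transport _ (window_mass n phat i (2 ^ 2 ^ K)) out); auto.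
  - apply pow_lt. lra.
  - rewrite <- HDD, Hhalf. lra.
Qed.

Lemma key_search_cost n a med p phat g i : sorted_keys n a -> valid_median n phat med ->
  is_distr n p -> is_distr n phat -> is_coupling n p phat g -> (1 <= i <= n)%nat ->
  exists c, algA a med (n + 2) 0 1 n (a i) = Some (i, c) /\
    (0 < p i -> INR c <= 4 * log2 (key_weight n p g i / p i) + 2).
Proof.
  intros Ha Hmed [Hp0 Hpsum] Hphat Hc Hi.
  assert (Hp1 : p i <= 1) by (rewrite <- Hpsum; apply sumR_single; auto).
  destruct (dec_inh_nat_subset_has_unique_least_element (terminates_by n phat i)
    (fun K => classic _) (ex_intro _ n (terminates_by_last n phat i Hi (proj2 Hphat))))
    as [K [[HK Hleast] _]].
  destruct (algA_cost_by_level n a med phat i K Ha Hi Hmed Hphat HK) as [c [E Hcost]].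
  exists c. split; [exact E|intros Hp].
  assert (Hfirst : K = 0%nat \/ ~ terminates_by n phat i (pred K)).
  { destruct K as [|K]; [left; reflexivity|right; intros HK'; specialize (Hleast K HK'); lia]. }
  pose proof (first_level_weight n p phat g i K Hc Hi Hp Hp1 Hfirst) as Hw.
  assert (Hlog : INR (2 ^ K) <= log2 (key_weight n p g i / p i)).
  { rewrite <- log2_pow2. apply log2_le; [apply pow_lt; lra|].
    apply (Rmult_le_reg_l (p i)); [exact Hp|].
    replace (p i * (key_weight n p g i / p i)) with (key_weight n p g i) by (field; lra).
    exact Hw. }
  apply le_INR in Hcost. rewrite plus_INR, mult_INR in Hcost. simpl in Hcost. lra.
Qed.

Lemma weighted_sum_pos n p Z : is_distr n p -> (forall j, (1 <= j <= n)%nat -> 0 < Z j) ->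
  0 < sumR 1 n (fun j => p j * Z j).
Proof.
  intros [Hp Hsum] HZ.
  assert (Hsupp : exists j, (1 <= j <= n)%nat /\ 0 < p j).
  { apply NNPP. intros Hnone.
    assert (Hle : sumR 1 n p <= sumR 1 n (fun j => 0 * p j)).
    2:{ rewrite sumR_scal in Hle. lra. }
    apply sumR_le. intros j Hj. apply Rnot_lt_le. intros Hpos.
    apply Hnone. exists j. split; [exact Hj|lra]. }
  destruct Hsupp as [j [Hj Hpj]].
  apply (Rlt_le_trans _ (p j * Z j)); [apply Rmult_lt_0_compat; auto|].
  apply (sumR_single 1 n (fun k => p k * Z k)); [|exact Hj].
  intros k Hk. apply Rmult_le_pos; [apply Hp|left; apply HZ]; exact Hk.
Qed.

Lemma ln_tangent z m : 0 < z -> 0 < m -> ln z <= ln m + z / m - 1.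
Proof.
  intros Hz Hm. pose proof (exp_ineq1_le (ln (z / m))) as H.
  rewrite exp_ln in H by (apply Rdiv_lt_0_compat; assumption).
  unfold Rdiv in H. rewrite ln_mult, ln_Rinv in H by auto using Rinv_0_lt_compat. lra.
Qed.

Lemma jensen_ln n p Z : is_distr n p -> (forall j, (1 <= j <= n)%nat -> 0 < Z j) ->
  sumR 1 n (fun j => p j * ln (Z j)) <= ln (sumR 1 n (fun j => p j * Z j)).
Proof.
  intros Hd HZ. pose proof Hd as [Hp Hsum].
  set (m := sumR 1 n (fun j => p j * Z j)).
  assert (Hm : 0 < m) by (apply weighted_sum_pos; assumption).
  apply (Rle_trans _ (sumR 1 n (fun j => ln m * p j + / m * (p j * Z j) + (-1) * p j))).
  - apply sumR_le. intros j Hj.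
    pose proof (ln_tangent (Z j) m (HZ j Hj) Hm). pose proof (Hp j Hj).
    replace (ln m * p j + / m * (p j * Z j) + -1 * p j)
      with (p j * (ln m + Z j / m - 1)) by (field; lra).
    apply Rmult_le_compat_l; assumption.
  - rewrite !sumR_add, !sumR_scal, Hsum. fold m. right. field. lra.
Qed.

Lemma plogp_eq x : plogp x = x * log2 x.
Proof. unfold plogp. destruct (Req_EM_T x 0) as [->|_]; ring. Qed.

Lemma expected_cost_le n p Z (C : nat -> nat) : is_distr n p ->
  (forall j, (1 <= j <= n)%nat -> 0 < Z j) ->
  (forall j, (1 <= j <= n)%nat -> 0 < p j -> INR (C j) <= 4 * log2 (Z j / p j) + 2) ->
  sumR 1 n (fun j => p j * INR (C j)) <=
    4 * (entropy n p + log2 (sumR 1 n (fun j => p j * Z j))) + 2.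
Proof.
  intros Hd HZ HC. pose proof Hd as [Hp Hsum]. pose proof ln2_pos.
  apply (Rle_trans _ (sumR 1 n (fun j =>
      4 / ln 2 * (p j * ln (Z j)) + (-4) * plogp (p j) + 2 * p j))).
  - apply sumR_le. intros j Hj. rewrite plogp_eq.
    destruct (Rle_lt_or_eq _ _ (Hp j Hj)) as [Hpos|<-]; [|lra].
    apply (Rle_trans _ (p j * (4 * log2 (Z j / p j) + 2))).
    + apply Rmult_le_compat_l; [lra|exact (HC j Hj Hpos)].
    + rewrite log2_div by auto. unfold log2. right. field. lra.
  - rewrite !sumR_add, !sumR_scal, Hsum.
    pose proof (jensen_ln n p Z Hd HZ).
    unfold entropy, log2.
    assert (4 / ln 2 * sumR 1 n (fun j => p j * ln (Z j)) <=
            4 / ln 2 * ln (sumR 1 n (fun j => p j * Z j))).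
    { apply Rmult_le_compat_l; [|assumption]. apply Rlt_le, Rdiv_lt_0_compat; lra. }
    unfold Rdiv in *. lra.
Qed.

Lemma expected_weight_le n p phat g : is_distr n p -> is_coupling n p phat g ->
  sumR 1 n (fun j => p j * key_weight n p g j) <=
    4 + 4 * (coupling_cost n g * coupling_cost n g).
Proof.
  intros [Hp Hsum] Hc.
  change (coupling_cost n g) with (sumR 1 n (key_transport n g)).
  set (cc := sumR 1 n (key_transport n g)).
  assert (Hcj : forall j, (1 <= j <= n)%nat -> 0 <= key_transport n g j)
    by (intros; eapply key_transport_nonneg; eauto).
  assert (Hcc : forall j, (1 <= j <= n)%nat -> key_transport n g j <= cc)
    by (intros; apply sumR_single; auto).
  apply (Rle_trans _ (sumR 1 n (fun j => 4 * p j + (4 * cc) * key_transport n g j))).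
  - apply sumR_le. intros j Hj. pose proof (Hcj j Hj). pose proof (Hcc j Hj).
    unfold key_weight. set (c := key_transport n g j) in *.
    destruct (Rle_lt_or_eq _ _ (Hp j Hj)) as [Hpos|<-]; [|nra].
    assert (Rmax 1 (c * c / p j) <= 1 + c * c / p j).
    { apply Rmax_lub; [|]; assert (0 <= c * c / p j) by
        (apply Rmult_le_pos; [nra|left; apply Rinv_0_lt_compat; lra]); lra. }
    assert (p j * (4 * Rmax 1 (c * c / p j)) <= 4 * p j + 4 * (c * c)); [|nra].
    replace (4 * p j + 4 * (c * c)) with (p j * (4 * (1 + c * c / p j))) by (field; lra).
    apply Rmult_le_compat_l; lra.
  - rewrite sumR_add, !sumR_scal, Hsum. fold cc. lra.
Qed.

Lemma log_weight_le_log_term c eta : 0 <= c -> c < eta + 1/4 ->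
  4 * log2 (4 + 4 * (c * c)) + 2 <= 8 * log_term eta + 8.
Proof.
  intros Hc Hce.
  replace (4 + 4 * (c * c)) with (2 ^ 2 * (1 + c * c)) by ring.
  rewrite log2_mult, log2_pow2 by (try apply pow_lt; nra). simpl INR.
  destruct (Rlt_le_dec eta 1) as [Hlt|Hge].
  - assert (1 <= log_term eta)
      by (unfold log_term; destruct (Rlt_dec 0 eta); [apply Rmax_r|lra]).
    assert (2 * log2 (1 + c * c) <= 3); [|lra].
    replace 3 with (INR 3) by (simpl; ring). rewrite <- log2_pow2.
    replace (2 * log2 (1 + c * c)) with (log2 ((1 + c * c) * (1 + c * c)))
      by (rewrite log2_mult by nra; ring).
    assert (c * c <= 25 / 16) by nra.
    apply log2_le; simpl; nra.
  - assert (log2 eta + 2 <= log_term eta)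
      by (unfold log_term; destruct (Rlt_dec 0 eta); [apply Rmax_l|lra]).
    assert (log2 (1 + c * c) <= 2 + 2 * log2 eta); [|lra].
    apply (Rle_trans _ (log2 (2 ^ 2 * (eta * eta)))); [apply log2_le; simpl; nra|].
    rewrite !log2_mult, log2_pow2 by (try apply pow_lt; nra). simpl INR. lra.
Qed.

Theorem theorem3p1 (n : nat) (a : nat -> R) (p phat : nat -> R) (eta : R)
  (med : nat -> nat -> nat) :
  (1 <= n)%nat ->
  (forall i j, (1 <= i)%nat -> (i < j)%nat -> (j <= n)%nat -> a i < a j) ->
  is_distr n p -> is_distr n phat ->
  is_emd n p phat eta ->
  valid_median n phat med ->
  exists C : nat -> nat,
    (forall i, (1 <= i <= n)%nat ->
       exists fuel, algA a med fuel 0 1 n (a i) = Some (i, C i)) /\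
    sumR 1 n (fun i => p i * INR (C i))
      <= 4 * entropy n p + 8 * log_term eta + 8.
Proof.
  intros _ Ha Hp Hphat Hemd Hmed.
  destruct (near_optimal_coupling n p phat eta Hemd) as [g [Hg Hcost]].
  set (C := fun i => match algA a med (n + 2) 0 1 n (a i) with
                     | Some (_, c) => c | None => 0%nat end).
  assert (HC : forall i, (1 <= i <= n)%nat ->
    algA a med (n + 2) 0 1 n (a i) = Some (i, C i) /\
    (0 < p i -> INR (C i) <= 4 * log2 (key_weight n p g i / p i) + 2)).
  { intros i Hi. destruct (key_search_cost n a med p phat g i Ha Hmed Hp Hphat Hg Hi) as [c [E Hc]].
    unfold C. rewrite E. auto. }
  exists C. split; [intros i Hi; exists (n + 2)%nat; apply HC, Hi|].
  assert (HZ : forall j, (1 <= j <= n)%nat -> 0 < key_weight n p g j)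
    by (intros j _; pose proof (key_weight_ge4 n p g j); lra).
  pose proof (expected_cost_le n p (key_weight n p g) C Hp HZ (fun j Hj => proj2 (HC j Hj))).
  pose proof (expected_weight_le n p phat g Hp Hg) as Hw.
  assert (Hcc : 0 <= coupling_cost n g)
    by (apply sumR_nonneg; intros x Hx; eapply key_transport_nonneg; eauto).
  assert (log2 (sumR 1 n (fun j => p j * key_weight n p g j)) <=
          log2 (4 + 4 * (coupling_cost n g * coupling_cost n g)))
    by (apply log2_le; [apply weighted_sum_pos|]; assumption).
  pose proof (log_weight_le_log_term _ eta Hcc Hcost).
  lra.
Qed.
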